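(* Let $\hat{\mathbb{N}}$ be the set of odd integers $n\ge 3$, let $n \in \hat{\mathbb{N}}$ and $M \subseteq \hat{\mathbb{N}} \setminus \{n\}$. Then $\mathrm{pPol}\, R^{0,2}_n \not\supseteq \bigcap_{m \in M} \mathrm{pPol}\, R^{0,2}_m$.
   Context: Partial functions are on $\{0,1\}$: an $n$-ary partial function is a map $f:\operatorname{dom} f\to\{0,1\}$ with $\operatorname{dom} f\subseteq\{0,1\}^n$; $P_{\mathbf{2}}$ is the set of all of them, and an empty intersection of subsets of $P_{\mathbf{2}}$ is understood as $P_{\mathbf{2}}$. For $\rho\subseteq\{0,1\}^h$, $\mathrm{pPol}\,\rho$ is the set of partial functions $f$ such that for every $h\times n$ matrix whose rows lie in $\operatorname{dom} f$ and whose columns lie in $\rho$, the column obtained by applying $f$ row-wise lies in $\rho$. Let $\rho_{0,2}=\{(0,0),(0,1),(1,0)\}$. For $n\ge2$, $R^{0,2}_{C,n}=\{(x_1,\dots,x_n)\in\{0,1\}^n: (x_i,x_{i+1})\in\rho_{0,2}\text{ for } i\in[n], \text{ with } x_{n+1}:=x_1\}$, $R^{0,2}_{K,n}=\{(x_1,\dots,x_n): (x_i,x_j)\in\rho_{0,2}\text{ for all } i\ne j\}$, and $R^{0,2}_n=R^{0,2}_{C,n}\times R^{0,2}_{K,n}\subseteq\{0,1\}^{2n}$ (tuples $(x_1,\dots,x_{2n})$ with $(x_1,\dots,x_n)\in R^{0,2}_{C,n}$ and $(x_{n+1},\dots,x_{2n})\in R^{0,2}_{K,n}$). *)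

From mathcomp Require Import all_boot.
Set Implicit Arguments. Unset Strict Implicit. Unset Printing Implicit Defensive.

(* Boolean tuples of length n, i.e. elements of {0,1}^n (false = 0, true = 1). *)
Definition btuple (n : nat) := {ffun 'I_n -> bool}.

Record pfun := PFun { arity : nat; pfval : {ffun btuple arity -> option bool} }.

Definition in_dom (f : pfun) (x : btuple (arity f)) : bool := pfval f x != None.
Arguments in_dom : clear implicits.

Definition pPol (h : nat) (rho : pred (btuple h)) (f : pfun) : Prop :=
  forall M : 'I_h -> 'I_(arity f) -> bool,
    (forall i : 'I_h, in_dom f [ffun j => M i j]) ->
    (forall j : 'I_(arity f), rho [ffun i => M i j]) ->
    rho [ffun i => odflt false (pfval f [ffun j => M i j])].

Definition rho02 (x y : bool) : bool := ~~ (x && y).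

(* R^{0,2}_{C,n}: consecutive (cyclically, 0-based indices, successor i+1 mod n) *)
Definition RC02 (n : nat) : pred (btuple n) := fun x =>
  [forall i : 'I_n, forall j : 'I_n,
     (val j == i.+1 %% n) ==> rho02 (x i) (x j)].

Definition RK02 (n : nat) : pred (btuple n) := fun x =>
  [forall i : 'I_n, forall j : 'I_n, (i != j) ==> rho02 (x i) (x j)].

Definition R02 (n : nat) : pred (btuple (n + n)) := fun x =>
  RC02 [ffun i : 'I_n => x (lshift n i)] && RK02 [ffun i : 'I_n => x (rshift n i)].

Definition Nhat (n : nat) : Prop := odd n /\ 3 <= n.

(* Call two tuples disjoint if they have no common coordinate equal to 1.  A
   partial function preserves R^{0,2}_m iff, for rows in its domain that are
   disjoint along an m-cycle (resp. pairwise disjoint, m of them), its values are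
   never 1 at two consecutive (resp. two distinct) rows.  We build a function of
   arity 4n whose domain, under disjointness, is the disjoint union of an n-cycle
   and an n-clique, and which is 1 exactly on two adjacent cycle vertices; so it
   does not preserve R^{0,2}_n.  For odd m <> n, an m-clique (m >= 3) only fits
   into the n-clique, and only if m < n, since a triangle in the n-cycle forces
   n = 3; then a closed walk of odd length m < n cannot go around the odd n-cycle,
   so the m-cycle lies in the n-clique as well, where the function is 0. *)

From mathcomp Require Import all_boot zify.
Set Implicit Arguments. Unset Strict Implicit. Unset Printing Implicit Defensive.

Definition on_cycle (T : Type) (m : nat) (e : rel T) (r : 'I_m -> T) : Prop :=
  forall a b : 'I_m, val b = (val a).+1 %% m -> e (r a) (r b).

Definition on_clique (T : Type) (m : nat) (e : rel T) (r : 'I_m -> T) : Prop :=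
  forall a b : 'I_m, a != b -> e (r a) (r b).

Lemma RC02P n (x : btuple n) : reflect (on_cycle rho02 x) (RC02 x).
Proof.
apply: (iffP forallP) => [H a b ab | H a].
  by move/forallP/(_ b)/implyP: (H a); apply; apply/eqP.
by apply/forallP => b; apply/implyP => /eqP; apply: H.
Qed.

Lemma RK02P n (x : btuple n) : reflect (on_clique rho02 x) (RK02 x).
Proof.
apply: (iffP forallP) => [H a b ab | H a].
  by move/forallP/(_ b)/implyP: (H a); apply.
by apply/forallP => b; apply/implyP; apply: H.
Qed.

Definition disj (k : nat) (x y : btuple k) : bool := [forall t, rho02 (x t) (y t)].

Lemma disjC k : symmetric (@disj k).
Proof. by move=> x y; apply: eq_forallb => t; rewrite /rho02 andbC. Qed.

Definition pval (f : pfun) (x : btuple (arity f)) : bool := odflt false (pfval f x).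
Arguments pval : clear implicits.

Lemma pPol_R02P m (f : pfun) :
  pPol (@R02 m) f <->
  forall r s : 'I_m -> btuple (arity f),
    (forall a, in_dom f (r a)) -> (forall a, in_dom f (s a)) ->
    on_cycle (@disj _) r -> on_clique (@disj _) s ->
    on_cycle rho02 (pval f \o r) /\ on_clique rho02 (pval f \o s).
Proof.
split=> [fP r s Dr Ds Cr Ks | fP M D C].
- pose M i := match split i with inl a => r a | inr a => s a end.
  have Ml a : M (lshift m a) = r a by rewrite /M (unsplitK (inl _)).
  have Mr a : M (rshift m a) = s a by rewrite /M (unsplitK (inr _)).
  have Mrow i : [ffun j => M i j] = M i by apply/ffunP => j; rewrite ffunE.
  have D i : in_dom f [ffun j => M i j] by rewrite Mrow /M; case: splitP => a _.
  have col t : R02 [ffun i => M i t].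
    apply/andP; split.
    + by apply/RC02P => a b ab; rewrite !ffunE !Ml; apply: (forallP (Cr a b ab)).
    + by apply/RK02P => a b ab; rewrite !ffunE !Mr; apply: (forallP (Ks a b ab)).
  have /andP[/RC02P HC /RK02P HK] := fP (fun i j => M i j) D col.
  split=> a b ab.
  + by have := HC a b ab; rewrite !ffunE !Mrow !Ml.
  + by have := HK a b ab; rewrite !ffunE !Mrow !Mr.
- pose row i := [ffun j => M i j].
  have Cr : on_cycle (@disj _) (fun a => row (lshift m a)).
    move=> a b ab; apply/forallP => t; rewrite !ffunE.
    by have /andP[/RC02P /(_ a b ab) ] := C t; rewrite !ffunE.
  have Ks : on_clique (@disj _) (fun a => row (rshift m a)).
    move=> a b ab; apply/forallP => t; rewrite !ffunE.
    by have /andP[_ /RK02P /(_ a b ab)] := C t; rewrite !ffunE.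
  have [HC HK] := fP _ _ (fun a => D _) (fun a => D _) Cr Ks.
  apply/andP; split; [apply/RC02P => a b ab | apply/RK02P => a b ab]; rewrite !ffunE.
  + exact: HC.
  + exact: HK.
Qed.

Definition cycle_step (n : nat) : rel nat :=
  fun j k => (k == j.+1 %[mod n]) || (j == k.+1 %[mod n]).

Lemma cycle_step_irr n j : 1 < n -> ~~ cycle_step n j j.
Proof.
move=> n_gt1; rewrite /cycle_step orbb.
by have := eqn_modDl j 0 1 n; rewrite addn0 addn1 => ->; rewrite mod0n modn_small.
Qed.

(* [h] counts the forward steps; a backward step leaves [q a + a] unchanged mod n. *)
Lemma cycle_walk_mod n (q : nat -> nat) k :
  (forall a, a < k -> cycle_step n (q a) (q a.+1)) ->
  exists2 h, h <= k & q k + k = q 0 + h.*2 %[mod n].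
Proof.
elim: k => [|k IHk] step; first by exists 0; rewrite ?addn0.
have [h le_hk Eh] := IHk (fun a lt_ak => step a (ltnW lt_ak)).
case/orP: (step k (ltnSn k)) => /eqP Ek.
- exists h.+1; first by [].
  rewrite -modnDml Ek modnDml.
  have -> : (q k).+1 + k.+1 = (q k + k) + 2 by lia.
  by rewrite -modnDml Eh modnDml; congr (_ %% n); lia.
- exists h; first exact: leqW.
  rewrite -Eh -[RHS]modnDml Ek modnDml; congr (_ %% n); lia.
Qed.

Lemma odd_closed_walk n m (p : 'I_m -> nat) :
  odd n -> odd m -> on_cycle (cycle_step n) p -> n <= m.
Proof.
move=> n_odd m_odd walk; have m_gt0 : 0 < m by case: m m_odd {p walk}.
pose q k := p (Ordinal (ltn_pmod k m_gt0)).
have step a : cycle_step n (q a) (q a.+1).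
  by apply: walk => /=; rewrite -addn1 -modnDml addn1.
have [h le_hm] := @cycle_walk_mod n q m (fun a _ => step a).
have -> : q m = q 0 by rewrite /q; congr p; apply: val_inj; rewrite /= modnn mod0n.
move/eqP; rewrite eqn_modDl => /eqP; apply: contra_eqT; rewrite -ltnNge => lt_mn.
rewrite (modn_small lt_mn).
have [lt_hn | le_nh] := ltnP h.*2 n; first by rewrite modn_small //; lia.
have -> : h.*2 = h.*2 - n + n by lia.
rewrite modnDr modn_small; lia.
Qed.

Lemma on_cycle_propagate m (P : 'I_m -> Prop) (a0 : 'I_m) :
  val a0 = 0 -> (forall a b : 'I_m, val b = (val a).+1 %% m -> P a -> P b) ->
  P a0 -> forall a, P a.
Proof.
move=> a00 step Pa0; suff Pk k (lt_km : k < m) : P (Ordinal lt_km).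
  by move=> a; have := Pk _ (ltn_ord a); congr P; apply: val_inj.
elim: k lt_km => [|k IHk] lt_km.
  by have -> : Ordinal lt_km = a0 by apply: val_inj.
by apply: (step (Ordinal (ltnW lt_km))) (IHk _) => /=; rewrite modn_small.
Qed.

Lemma on_clique_card_le (T : Type) (e : rel T) m n (v : 'I_n -> T) (s : 'I_m -> T) :
  (forall j, ~~ e (v j) (v j)) -> (forall a, exists j, s a = v j) ->
  on_clique e s -> m <= n.
Proof.
move=> irr /fin_all_exists[g Eg] Ks; rewrite -[m]card_ord -[n]card_ord.
apply: (@leq_card _ _ g) => a b gab; apply: contraTeq (irr (g b)) => ab.
by rewrite negbK; have := Ks a b ab; rewrite !Eg gab.
Qed.

(* The coordinates of a (4n)-tuple form four blocks of n positions.  Block 0 of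
   [cyc_vec n j] holds the positions at even cyclic distance at most n-3 behind j,
   so two of these meet unless j and k are adjacent on the n-cycle.  Block
   [colour n j + 1] is full, [colour] being a proper 3-colouring of the odd cycle,
   so [cyc_vec n j] meets every [clq_vec n i] while adjacent ones stay disjoint. *)
Definition arc (n j i : nat) : bool :=
  let d := (j + n - i) %% n in ~~ odd d && (d <= n - 3).

Definition colour (n j : nat) : nat := if j == n.-1 then 2 else odd j.

Definition cyc_vec (n j : nat) : btuple (4 * n) :=
  [ffun t : 'I_(4 * n) =>
     if t %/ n == 0 then arc n j (t %% n) else t %/ n == (colour n j).+1].

Definition clq_vec (n i : nat) : btuple (4 * n) :=
  [ffun t : 'I_(4 * n) => (0 < t %/ n) && (t %% n == i)].

Lemma exists_block_coord n b i :
  b < 4 -> i < n -> exists t : 'I_(4 * n), t %/ n = b /\ t %% n = i.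
Proof.
move=> lt_b4 lt_in; have lt_t : b * n + i < 4 * n by nia.
exists (Ordinal lt_t) => /=; split; last by rewrite modnMDl modn_small.
by rewrite divnMDl ?divn_small ?addn0 //; lia.
Qed.

Lemma cyc_vec_neq_clq_vec n j i : j < n -> cyc_vec n j != clq_vec n i.
Proof.
move=> lt_jn; apply/eqP => /ffunP E.
have [t [t0 tj]] := exists_block_coord (isT : 0 < 4) lt_jn.
move: (E t); rewrite !ffunE t0 tj /arc (_ : j + n - j = n); last by lia.
by rewrite modnn /=; lia.
Qed.

Lemma disj_cyc_clq n j i : i < n -> ~~ disj (cyc_vec n j) (clq_vec n i).
Proof.
move=> lt_in; have lt_c4 : (colour n j).+1 < 4 by rewrite /colour; case: ifP; lia.
have [t [tc ti]] := exists_block_coord lt_c4 lt_in.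
by apply/forallPn; exists t; rewrite !ffunE tc ti !eqxx.
Qed.

Lemma disj_clq_vec n i k : i < n -> disj (clq_vec n i) (clq_vec n k) = (i != k).
Proof.
move=> lt_in; apply/forallP/idP => [H | neq_ik t].
  apply: contraPneq H => <- H; have [t [t1 ti]] := exists_block_coord (isT : 1 < 4) lt_in.
  by move: (H t); rewrite !ffunE t1 ti eqxx.
by rewrite !ffunE /rho02; apply: contra neq_ik => /andP[/andP[_ /eqP <-] /andP[_ /eqP <-]].
Qed.

Lemma arcE n j i : j < n -> i < n ->
  arc n j i = let d := if i <= j then j - i else j + n - i in ~~ odd d && (d <= n - 3).
Proof.
move=> lt_jn lt_in; rewrite /arc; case: (leqP i j) => le_ij /=.
- by rewrite (_ : j + n - i = j - i + n) ?modnDr ?modn_small //; lia.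
- by rewrite modn_small //; lia.
Qed.

Lemma modn_succ n j : j < n -> j.+1 %% n = if j.+1 == n then 0 else j.+1.
Proof. by move=> lt_jn; case: eqP => [->|?]; rewrite ?modnn // modn_small //; lia. Qed.

Lemma disj_cyc_vec_step n j k : odd n -> 3 <= n -> j < n -> k < n ->
  disj (cyc_vec n j) (cyc_vec n k) -> cycle_step n j k.
Proof.
move=> n_odd n_ge3 lt_jn lt_kn H.
have arcs i : i < n -> ~~ (arc n j i && arc n k i).
  move=> lt_in; have [t [t0 ti]] := exists_block_coord (isT : 0 < 4) lt_in.
  by move/forallP/(_ t): H; rewrite !ffunE t0 ti.
rewrite /cycle_step (modn_small lt_jn) (modn_small lt_kn) !modn_succ //.
have := arcs j lt_jn; have := arcs k lt_kn; rewrite !arcE //= !leqnn !subnn.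
by case: (ltngtP j k) => ? /=; do 2 case: ifP => /eqP ? /=; lia.
Qed.

Lemma disj_cyc_vec_succ n j : odd n -> 3 <= n -> j < n ->
  disj (cyc_vec n j) (cyc_vec n (j.+1 %% n)).
Proof.
move=> n_odd n_ge3 lt_jn; rewrite modn_succ //; apply/forallP => t; rewrite !ffunE /rho02.
have lt_in : t %% n < n by rewrite ltn_mod; lia.
case: ifP => _.
- by case: eqP => E; rewrite !arcE //; try lia; do 2 case: ifP => ? /=; lia.
- by rewrite /colour; case: (j.+1 =P n) => ?; repeat case: ifP => /eqP ?; lia.
Qed.

Definition cyc_point n (x : btuple (4 * n)) : bool := [exists j : 'I_n, x == cyc_vec n j].
Definition clq_point n (x : btuple (4 * n)) : bool := [exists i : 'I_n, x == clq_vec n i].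

Definition sep_fun n : pfun :=
  @PFun (4 * n) [ffun x =>
    if (x == cyc_vec n 0) || (x == cyc_vec n 1) then Some true
    else if cyc_point x || clq_point x then Some false else None].

Lemma in_dom_sep_fun n x : 1 < n -> in_dom (sep_fun n) x = cyc_point x || clq_point x.
Proof.
move=> n_gt1; rewrite /in_dom ffunE; case: ifP => [/orP[]/eqP -> | _]; last by case: ifP.
all: symmetry; apply/orP; left; apply/existsP.
- by exists (Ordinal (ltnW n_gt1)).
- by exists (Ordinal n_gt1).
Qed.

Lemma pval_sep_fun n x : pval (sep_fun n) x = (x == cyc_vec n 0) || (x == cyc_vec n 1).
Proof. by rewrite /pval ffunE; case: ifP => // _; case: ifP. Qed.

Lemma pval_sep_fun_clq n x : 1 < n -> clq_point x -> pval (sep_fun n) x = false.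
Proof.
move=> n_gt1 /existsP[i /eqP ->]; rewrite pval_sep_fun.
by rewrite ![clq_vec _ _ == _]eq_sym !(negbTE (cyc_vec_neq_clq_vec _ _)) //; lia.
Qed.

Section DisjointRows.

Variables (n m : nat).
Hypotheses (n_odd : odd n) (n_ge3 : 3 <= n).

Let in_dom_n (x : btuple (4 * n)) : bool := cyc_point x || clq_point x.

Lemma cyc_point_disj (x y : btuple (4 * n)) :
  cyc_point x -> in_dom_n y -> disj x y -> cyc_point y.
Proof.
move=> /existsP[j /eqP ->] /orP[// | /existsP[i /eqP ->]].
by rewrite (negbTE (disj_cyc_clq _ _)).
Qed.

Lemma clq_point_disj (x y : btuple (4 * n)) :
  clq_point x -> in_dom_n y -> disj x y -> clq_point y.
Proof.
move=> /existsP[i /eqP ->] /orP[/existsP[j /eqP ->] | //].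
by rewrite disjC (negbTE (disj_cyc_clq _ _)).
Qed.

Lemma cyc_point_labels (r : 'I_m -> btuple (4 * n)) :
  (forall a, cyc_point (r a)) -> exists g : 'I_m -> 'I_n, forall a, r a = cyc_vec n (g a).
Proof.
move=> cyc; have lab a : exists j : 'I_n, r a = cyc_vec n j.
  by have /existsP[j /eqP] := cyc a; exists j.
exact: fin_all_exists lab.
Qed.

Lemma disj_cyc_vec_self (j : 'I_n) : ~~ disj (cyc_vec n j) (cyc_vec n j).
Proof.
have n_gt1 : 1 < n by lia.
apply: contra (cycle_step_irr j n_gt1).
exact: disj_cyc_vec_step n_odd n_ge3 (ltn_ord j) (ltn_ord j).
Qed.

Lemma clique_rows_clq (s : 'I_m -> btuple (4 * n)) :
  3 <= m -> m != n -> (forall a, in_dom_n (s a)) -> on_clique (@disj _) s ->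
  m < n /\ forall a, clq_point (s a).
Proof.
move=> m_ge3 m_neq Ds Ks; have m_gt0 : 0 < m by lia.
pose a0 := Ordinal m_gt0.
case/orP: (Ds a0) => [cyc0 | clq0].
- have cyc a : cyc_point (s a).
    by case: (eqVneq a0 a) => [<- // | ne]; apply: cyc_point_disj cyc0 (Ds a) (Ks _ _ ne).
  have [g Eg] := cyc_point_labels cyc.
  have le_n3 : n <= 3.
    apply: (@odd_closed_walk n 3 (fun i => g (widen_ord m_ge3 i))) => // a b ab.
    apply: disj_cyc_vec_step => //; rewrite -!Eg; apply: Ks.
    by apply/eqP => /(congr1 val) /= ab_eq; move: ab => /=; lia.
  have le_mn : m <= n.
    apply: (on_clique_card_le (v := fun j => cyc_vec n j) disj_cyc_vec_self) Ks.
    by move=> a; exists (g a).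
  lia.
- have clq a : clq_point (s a).
    by case: (eqVneq a0 a) => [<- // | ne]; apply: clq_point_disj clq0 (Ds a) (Ks _ _ ne).
  split=> //; rewrite ltn_neqAle m_neq /=.
  apply: (on_clique_card_le (v := fun i => clq_vec n i)) Ks => [i | a].
  + by rewrite disj_clq_vec // eqxx.
  + by have /existsP[i /eqP ->] := clq a; exists i.
Qed.

Lemma cycle_rows_clq (r : 'I_m -> btuple (4 * n)) :
  odd m -> m < n -> (forall a, in_dom_n (r a)) -> on_cycle (@disj _) r ->
  forall a, clq_point (r a).
Proof.
move=> m_odd lt_mn Dr Cr; have m_gt0 : 0 < m by case: m m_odd {lt_mn r Dr Cr}.
pose a0 := Ordinal m_gt0.
case/orP: (Dr a0) => [cyc0 | clq0].
- have cyc : forall a, cyc_point (r a).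
    apply: (on_cycle_propagate (a0 := a0)) cyc0 => // a b ab cyc_a.
    exact: cyc_point_disj cyc_a (Dr b) (Cr a b ab).
  have [g Eg] := cyc_point_labels cyc.
  have : n <= m.
    apply: (@odd_closed_walk n m (fun a => g a)) => // a b ab.
    by apply: disj_cyc_vec_step => //; rewrite -!Eg; apply: Cr.
  by rewrite leqNgt lt_mn.
- apply: (on_cycle_propagate (a0 := a0)) clq0 => // a b ab clq_a.
  exact: clq_point_disj clq_a (Dr b) (Cr a b ab).
Qed.

End DisjointRows.

Lemma sep_fun_pPol_R02 n m : odd n -> 3 <= n -> odd m -> 3 <= m -> m != n ->
  pPol (@R02 m) (sep_fun n).
Proof.
move=> n_odd n_ge3 m_odd m_ge3 m_neq; have n_gt1 : 1 < n by lia.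
apply/pPol_R02P => r s Dr Ds Cr Ks.
have {}Dr a : cyc_point (r a) || clq_point (r a) by rewrite -in_dom_sep_fun.
have {}Ds a : cyc_point (s a) || clq_point (s a) by rewrite -in_dom_sep_fun.
have [lt_mn clq_s] := clique_rows_clq n_odd n_ge3 m_ge3 m_neq Ds Ks.
have clq_r := cycle_rows_clq n_odd n_ge3 m_odd lt_mn Dr Cr.
by split=> a b _; rewrite /= !pval_sep_fun_clq.
Qed.

Lemma sep_fun_not_pPol_R02 n : odd n -> 3 <= n -> ~ pPol (@R02 n) (sep_fun n).
Proof.
move=> n_odd n_ge3; have n_gt1 : 1 < n by lia.
move/pPol_R02P/(_ (fun j => cyc_vec n j) (fun i => clq_vec n i)).
have dom_cyc (j : 'I_n) : in_dom (sep_fun n) (cyc_vec n j).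
  by rewrite in_dom_sep_fun //; apply/orP; left; apply/existsP; exists j.
have dom_clq (i : 'I_n) : in_dom (sep_fun n) (clq_vec n i).
  by rewrite in_dom_sep_fun //; apply/orP; right; apply/existsP; exists i.
case=> // [a b -> | a b ab | /(_ (Ordinal (ltnW n_gt1)) (Ordinal n_gt1)) ].
- exact: disj_cyc_vec_succ.
- by rewrite disj_clq_vec.
- by rewrite /= modn_small // !pval_sep_fun !eqxx orbT => /(_ erefl).
Qed.

Theorem mainTheorem16 (n : nat) (M : nat -> Prop) :
  Nhat n ->
  (forall m, M m -> Nhat m /\ m <> n) ->
  ~ (forall f : pfun, (forall m, M m -> pPol (@R02 m) f) -> pPol (@R02 n) f).
Proof.
move=> [n_odd n_ge3] HM incl.
apply: (sep_fun_not_pPol_R02 n_odd n_ge3); apply: incl => m /HM [[m_odd m_ge3] /eqP m_neq].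
exact: sep_fun_pPol_R02.
Qed.
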